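(* Let $\alpha\in(1,2)$, $H\in\left(\frac{2-\alpha}{2},\frac12\right)$, $t>0$, and $h(\xi):=\big(1-e^{-2t\xi^\alpha}\big)\xi^{1-2H-\alpha}$ for $\xi>0$. Then $$\int_0^\infty h(\xi)\cos(\xi r)\,d\xi=O\big(r^{\frac{H-1}{2}}\big)\quad\text{as } r\to\infty.$$
   Context: The integral is understood as an improper Riemann integral $\lim_{R\to\infty}\int_0^R$. *)

From Stdlib Require Import Reals.
From Coquelicot Require Import Coquelicot.
Open Scope R_scope.

(* h(xi) = (1 - exp(-2 t xi^alpha)) * xi^(1 - 2H - alpha) for xi > 0;
   the value at xi <= 0 is irrelevant for the integral over [0, R]; we set it to 0. *)
Definition h (alpha H t xi : R) : R :=
  if Rlt_dec 0 xi then
    (1 - exp (- (2 * t * Rpower xi alpha))) * Rpower xi (1 - 2 * H - alpha)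
  else 0.

Definition is_improper_RInt_0_oo (f : R -> R) (I : R) : Prop :=
  (forall Rb : R, 0 <= Rb -> ex_RInt f 0 Rb) /\
  is_lim (fun Rb => RInt f 0 Rb) p_infty I.

(* Split the integral at a = r^(-1/2).  On [0, a] the integrand is bounded by 2t, since
   0 <= h(xi) <= 2t xi^(1-2H).  On [a, oo) integrate by parts against sin(xi r)/r:
   h(xi) <= (2t+1)/xi vanishes at infinity and |h'(xi)| <= K/xi^2, so the tail is at most
   (2t + K/a)/r.  Both parts are O(r^(-1/2)), and r^(-1/2) <= r^((H-1)/2) because H > 0. *)

From Stdlib Require Import Reals Lra.
From Coquelicot Require Import Coquelicot.
Open Scope R_scope.

Lemma Rpower_gt_0 x p : 0 < Rpower x p.
Proof. apply exp_pos. Qed.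

Lemma Rpower_le_1_of_le_1 x p : 0 < x <= 1 -> 0 <= p -> Rpower x p <= 1.
Proof.
intros Hx Hp.
apply Rle_trans with (Rpower 1 p); [now apply Rle_Rpower_l|].
unfold Rpower. rewrite ln_1, Rmult_0_r, exp_0. lra.
Qed.

Lemma Rpower_le_1_of_ge_1 x p : 1 <= x -> p <= 0 -> Rpower x p <= 1.
Proof. intros Hx Hp. rewrite <- (Rpower_O x) by lra. now apply Rle_Rpower. Qed.

Lemma Rpower_lt_of_lt_root p eps y :
  0 < p -> 0 < eps -> 0 < y < Rpower eps (/ p) -> Rpower y p < eps.
Proof.
intros Hp Heps Hy.
rewrite <- (Rpower_1 eps), <- (Rinv_l p), <- Rpower_mult by lra.
now apply Rlt_Rpower_l.
Qed.

Lemma Rpower_minus_1 x p : 0 < x -> Rpower x (p - 1) = Rpower x p / x.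
Proof.
intros Hx. unfold Rminus. now rewrite Rpower_plus, Rpower_Ropp, Rpower_1.
Qed.

Lemma exp_opp_le_1 X : 0 <= X -> exp (- X) <= 1.
Proof.
intros [HX|<-]; [left; rewrite <- exp_0; apply exp_increasing; lra|].
rewrite Ropp_0, exp_0. lra.
Qed.

Lemma one_sub_exp_opp_le X : 1 - exp (- X) <= X.
Proof. generalize (exp_ineq1_le (- X)). lra. Qed.

Lemma one_sub_exp_opp_ge_0 X : 0 <= X -> 0 <= 1 - exp (- X).
Proof. intros HX. generalize (exp_opp_le_1 X HX). lra. Qed.

Lemma mul_exp_opp_le_1 X : X * exp (- X) <= 1.
Proof.
rewrite exp_Ropp. generalize (exp_ineq1_le X) (exp_pos X). intros H1 H2.
apply Rmult_le_reg_r with (exp X); [exact H2|].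
rewrite Rmult_assoc, Rinv_l by lra. lra.
Qed.

Lemma abs_mul_sin_le x y : Rabs (x * sin y) <= Rabs x.
Proof.
rewrite Rabs_mult. rewrite <- (Rmult_1_r (Rabs x)) at 2.
apply Rmult_le_compat_l; [apply Rabs_pos|apply Rabs_le, SIN_bound].
Qed.

Lemma abs_mul_cos_le x y : Rabs (x * cos y) <= Rabs x.
Proof.
rewrite Rabs_mult. rewrite <- (Rmult_1_r (Rabs x)) at 2.
apply Rmult_le_compat_l; [apply Rabs_pos|apply Rabs_le, COS_bound].
Qed.

Lemma abs_RInt_le_inv_square (f : R -> R) K b1 b2 :
  0 < b1 <= b2 -> ex_RInt f b1 b2 ->
  (forall x, b1 <= x <= b2 -> Rabs (f x) <= K / (x * x)) ->
  Rabs (RInt f b1 b2) <= K / b1 - K / b2.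
Proof.
intros Hb Hf Hbd.
assert (Hprim : is_RInt (fun x => K / (x * x)) b1 b2 (K / b1 - K / b2)).
{ replace (K / b1 - K / b2) with (minus (- (K / b2)) (- (K / b1)))
    by (unfold minus, plus, opp; simpl; ring).
  apply (is_RInt_derive (fun x => - (K / x))); rewrite Rmin_left, Rmax_right by lra;
    intros x Hx.
  - auto_derive; [lra|field; lra].
  - apply (ex_derive_continuous (V := R_NormedModule)). auto_derive. nra. }
exact (norm_RInt_le f _ b1 b2 _ _ (proj2 Hb) Hbd (RInt_correct _ _ _ Hf) Hprim).
Qed.

Lemma is_lim_RInt_of_inv_square_bound (f : R -> R) a K :
  0 < a -> 0 <= K ->
  (forall b, a <= b -> ex_RInt f a b) ->
  (forall x, a <= x -> Rabs (f x) <= K / (x * x)) ->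
  exists L : R, is_lim (fun b => RInt f a b) p_infty L /\ Rabs L <= K / a.
Proof.
intros Ha HK Hex Hbd.
set (P := fun b => RInt f a b).
assert (Hdiff : forall b1 b2, a <= b1 <= b2 -> Rabs (P b2 - P b1) <= K / b1).
{ intros b1 b2 Hb. unfold P.
  assert (Hex12 : ex_RInt f b1 b2)
    by (apply (ex_RInt_Chasles_2 (V := R_CompleteNormedModule)) with a; auto; apply Hex; lra).
  rewrite <- (RInt_Chasles (V := R_CompleteNormedModule) f a b1 b2) by (auto; apply Hex; lra).
  replace (plus (RInt f a b1) (RInt f b1 b2) - RInt f a b1) with (RInt f b1 b2)
    by (unfold plus; simpl; lra).
  assert (0 <= K / b2) by (apply Rdiv_le_0_compat; lra).
  assert (Rabs (RInt f b1 b2) <= K / b1 - K / b2)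
    by (apply abs_RInt_le_inv_square; [lra | exact Hex12 | intros x Hx; apply Hbd; lra]).
  lra. }
set (F := filtermap P (Rbar_locally p_infty)).
assert (FP : ProperFilter F) by apply filtermap_proper_filter, Rbar_locally_filter.
assert (FC : cauchy F).
{ intros eps. pose proof (cond_pos eps) as Heps.
  set (N := a + K / eps + 1).
  assert (HKe : 0 <= K / eps) by (apply Rdiv_le_0_compat; lra).
  exists (P N), N. intros x Hx.
  change (Rabs (P x - P N) < eps).
  apply Rle_lt_trans with (K / N); [apply Hdiff; unfold N in *; lra|].
  assert (HN : 0 < N) by (unfold N; lra).
  apply (Rmult_lt_reg_r N); [exact HN|].
  unfold Rdiv at 1. rewrite Rmult_assoc, Rinv_l, Rmult_1_r by lra.
  assert (eps * (K / eps) = K) by (field; lra).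
  unfold N. nra. }
assert (Hlim : is_lim P p_infty (lim F))
  by (apply filterlim_locally; exact (complete_cauchy F FP FC)).
exists (lim F). split; [exact Hlim|].
assert (Hbd_a : Rbar_locally' p_infty (fun b => - (K / a) <= P b <= K / a)).
{ exists a. intros b Hb. generalize (Hdiff a b ltac:(lra)).
  unfold P at 2. rewrite RInt_point. unfold zero; simpl. rewrite Rminus_0_r.
  apply Rabs_le_between. }
assert (Hlo : Rbar_le (- (K / a)) (lim F)).
{ apply (is_lim_le_loc (fun _ => - (K / a)) P p_infty); [|apply is_lim_const|exact Hlim].
  revert Hbd_a. apply filter_imp. tauto. }
assert (Hup : Rbar_le (lim F) (K / a)).
{ apply (is_lim_le_loc P (fun _ => K / a) p_infty); [|exact Hlim|apply is_lim_const].
  revert Hbd_a. apply filter_imp. tauto. }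
apply Rabs_le. simpl in Hlo, Hup. split; assumption.
Qed.

Lemma RInt_mul_cos_by_parts (F dF : R -> R) r a b :
  r <> 0 -> a <= b ->
  (forall x, a <= x <= b -> is_derive F x (dF x)) ->
  (forall x, a <= x <= b -> continuous dF x) ->
  RInt (fun x => F x * cos (x * r)) a b =
    (F b * sin (b * r) - F a * sin (a * r) - RInt (fun x => dF x * sin (x * r)) a b) / r.
Proof.
intros Hr Hab HF HdF.
assert (Hsin : forall x, continuous (fun x => sin (x * r)) x)
  by (intros x; apply (ex_derive_continuous (V := R_NormedModule)); auto_derive; auto).
assert (Hcos : forall x, continuous (fun x => cos (x * r) * r) x)
  by (intros x; apply (ex_derive_continuous (V := R_NormedModule)); auto_derive; auto).
set (dG := fun x => dF x * sin (x * r) + F x * (cos (x * r) * r)).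
assert (HG : is_RInt dG a b (minus (F b * sin (b * r)) (F a * sin (a * r)))).
{ apply (is_RInt_derive (fun x => F x * sin (x * r))); rewrite Rmin_left, Rmax_right by lra;
    intros x Hx.
  - apply (is_derive_mult F (fun x => sin (x * r))); [now apply HF| |apply Rmult_comm].
    auto_derive; auto. ring.
  - apply (continuous_plus (fun x => dF x * sin (x * r))).
    + apply (continuous_mult dF); [now apply HdF|apply Hsin].
    + apply (continuous_mult F); [|apply Hcos].
      apply (ex_derive_continuous (V := R_NormedModule)). eexists. now apply HF. }
assert (Hex : ex_RInt (fun x => dF x * sin (x * r)) a b).
{ apply (ex_RInt_continuous (V := R_CompleteNormedModule)).
  rewrite Rmin_left, Rmax_right by lra. intros x Hx.
  apply (continuous_mult dF); [now apply HdF|apply Hsin]. }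
assert (HI : is_RInt (fun x => F x * cos (x * r)) a b
  (scal (/ r) (minus (minus (F b * sin (b * r)) (F a * sin (a * r)))
     (RInt (fun x => dF x * sin (x * r)) a b)))).
{ apply (is_RInt_ext (fun x => scal (/ r) (minus (dG x) (dF x * sin (x * r))))).
  2: exact (is_RInt_scal _ _ _ _ _ (is_RInt_minus _ _ _ _ _ _ HG (RInt_correct _ _ _ Hex))).
  intros x _. unfold dG, scal, minus, plus, opp; simpl. change mult with Rmult. field. exact Hr. }
rewrite (is_RInt_unique _ _ _ _ HI).
unfold scal, minus, plus, opp; simpl. change mult with Rmult. unfold Rdiv. ring.
Qed.

Lemma is_lim_mul_sin_0 (F : R -> R) r :
  is_lim F p_infty 0 -> is_lim (fun x => F x * sin (x * r)) p_infty 0.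
Proof.
intros HF. apply filterlim_locally. intros eps.
generalize (proj1 (filterlim_locally F 0) HF eps). apply filter_imp. intros x Hx.
change (Rabs (F x * sin (x * r) - 0) < eps). change (Rabs (F x - 0) < eps) in Hx.
rewrite Rminus_0_r in *. exact (Rle_lt_trans _ _ _ (abs_mul_sin_le _ _) Hx).
Qed.

Lemma is_lim_RInt_mul_cos (F dF : R -> R) r a K :
  0 < r -> 0 < a -> 0 <= K ->
  (forall x, a <= x -> is_derive F x (dF x)) ->
  (forall x, a <= x -> continuous dF x) ->
  (forall x, a <= x -> Rabs (dF x) <= K / (x * x)) ->
  is_lim F p_infty 0 ->
  exists J : R, is_lim (fun b => RInt (fun x => F x * cos (x * r)) a b) p_infty J /\
    Rabs J <= (Rabs (F a) + K / a) / r.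
Proof.
intros Hr Ha HK HF HdFc HdF HF0.
set (Fs := fun x => F x * sin (x * r)).
set (dFs := fun x => dF x * sin (x * r)).
destruct (is_lim_RInt_of_inv_square_bound dFs a K Ha HK) as [L [HL HLbd]].
- intros b Hb. apply (ex_RInt_continuous (V := R_CompleteNormedModule)).
  rewrite Rmin_left, Rmax_right by lra. intros x Hx.
  apply (continuous_mult dF); [apply HdFc; lra|].
  apply (ex_derive_continuous (V := R_NormedModule)). auto_derive. auto.
- intros x Hx. apply (Rle_trans _ _ _ (abs_mul_sin_le _ _)). now apply HdF.
- exists ((0 - Fs a - L) / r). split.
  + apply (is_lim_ext_loc (fun b => (Fs b - Fs a - RInt dFs a b) * / r)).
    * exists a. intros b Hb. symmetry.
      apply (RInt_mul_cos_by_parts F dF); [lra|lra| |]; intros x Hx; [apply HF|apply HdFc]; lra.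
    * apply (is_lim_scal_r _ (/ r) p_infty (0 - Fs a - L)).
      apply is_lim_minus'; [apply is_lim_minus'|exact HL].
      -- now apply is_lim_mul_sin_0.
      -- apply is_lim_const.
  + unfold Rdiv. rewrite Rabs_mult, (Rabs_pos_eq (/ r)) by (apply Rlt_le, Rinv_0_lt_compat, Hr).
    apply Rmult_le_compat_r; [apply Rlt_le, Rinv_0_lt_compat, Hr|].
    replace (0 - Fs a - L) with (- Fs a + - L) by ring.
    eapply Rle_trans; [apply Rabs_triang|]. rewrite !Rabs_Ropp.
    generalize (abs_mul_sin_le (F a) (a * r)). unfold Fs, Rdiv in *. lra.
Qed.

Lemma is_improper_RInt_0_oo_split (f : R -> R) (a J : R) :
  0 <= a -> (forall b, 0 <= b -> ex_RInt f 0 b) ->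
  is_lim (fun b => RInt f a b) p_infty J ->
  is_improper_RInt_0_oo f (RInt f 0 a + J).
Proof.
intros Ha Hex HJ. split; [exact Hex|].
apply (is_lim_ext_loc (fun b => RInt f 0 a + RInt f a b)).
- exists a. intros b Hb.
  apply (RInt_Chasles (V := R_CompleteNormedModule)); [apply Hex; lra|].
  apply (ex_RInt_Chasles_2 (V := R_CompleteNormedModule)) with 0; [lra|apply Hex; lra].
- apply (is_lim_plus' _ _ p_infty (RInt f 0 a) J); [apply is_lim_const|exact HJ].
Qed.

Section Transform_of_h.

Variables alpha H t : R.
Hypothesis Halpha : 1 < alpha < 2.
Hypothesis HH : (2 - alpha) / 2 < H < 1 / 2.
Hypothesis Ht : 0 < t.

Definition h_expr (x : R) : R :=
  (1 - exp (- (2 * t * Rpower x alpha))) * Rpower x (1 - 2 * H - alpha).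

Definition h_expr' (x : R) : R :=
  (2 * t * alpha * exp (- (2 * t * Rpower x alpha)) * Rpower x (2 - 2 * H)
   + (1 - 2 * H - alpha) * (1 - exp (- (2 * t * Rpower x alpha)))
       * Rpower x (2 - 2 * H - alpha)) / (x * x).

Lemma h_eq_h_expr x : 0 < x -> h alpha H t x = h_expr x.
Proof. intros Hx. unfold h. now destruct (Rlt_dec 0 x). Qed.

Lemma is_derive_h_expr x : 0 < x -> is_derive h_expr x (h_expr' x).
Proof.
intros Hx. unfold h_expr, h_expr', Rpower. auto_derive; [lra|].
replace ((2 - 2 * H) * ln x) with (alpha * ln x + (1 - 2 * H - alpha) * ln x + ln x) by ring.
replace ((2 - 2 * H - alpha) * ln x) with ((1 - 2 * H - alpha) * ln x + ln x) by ring.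
rewrite !exp_plus, exp_ln by exact Hx. field. lra.
Qed.

Lemma continuous_h_expr' x : 0 < x -> continuous h_expr' x.
Proof.
intros Hx. apply (ex_derive_continuous (V := R_NormedModule)).
unfold h_expr', Rpower. auto_derive. repeat split; nra.
Qed.

Lemma Rpower_split_alpha x :
  Rpower x (2 - 2 * H) = Rpower x alpha * Rpower x (2 - 2 * H - alpha).
Proof. rewrite <- Rpower_plus. f_equal. ring. Qed.

Lemma damped_power_le x :
  0 < x -> 2 * t * exp (- (2 * t * Rpower x alpha)) * Rpower x (2 - 2 * H) <= 2 * t + 1.
Proof.
intros Hx. set (X := 2 * t * Rpower x alpha).
assert (HX : 0 <= X) by (unfold X; generalize (Rpower_gt_0 x alpha); nra).
destruct (Rle_lt_dec x 1) as [Hx1|Hx1].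
- assert (Rpower x (2 - 2 * H) <= 1) by (apply Rpower_le_1_of_le_1; lra).
  assert (exp (- X) * Rpower x (2 - 2 * H) <= 1 * 1).
  { apply Rmult_le_compat; [apply Rlt_le, exp_pos|apply Rlt_le, Rpower_gt_0| |];
      [apply exp_opp_le_1|]; assumption. }
  nra.
- replace (2 * t * exp (- X) * Rpower x (2 - 2 * H))
    with (X * exp (- X) * Rpower x (2 - 2 * H - alpha))
    by (unfold X; rewrite Rpower_split_alpha; ring).
  assert (Rpower x (2 - 2 * H - alpha) <= 1) by (apply Rpower_le_1_of_ge_1; lra).
  assert (X * exp (- X) * Rpower x (2 - 2 * H - alpha) <= 1 * 1).
  { apply Rmult_le_compat; [|apply Rlt_le, Rpower_gt_0|apply mul_exp_opp_le_1|assumption].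
    generalize (exp_pos (- X)). nra. }
  lra.
Qed.

Lemma saturated_power_le x :
  0 < x -> (1 - exp (- (2 * t * Rpower x alpha))) * Rpower x (2 - 2 * H - alpha) <= 2 * t + 1.
Proof.
intros Hx. set (X := 2 * t * Rpower x alpha).
assert (HX : 0 <= X) by (unfold X; generalize (Rpower_gt_0 x alpha); nra).
generalize (one_sub_exp_opp_ge_0 X HX) (Rpower_gt_0 x (2 - 2 * H - alpha)). intros HE Hp.
destruct (Rle_lt_dec x 1) as [Hx1|Hx1].
- apply Rle_trans with (X * Rpower x (2 - 2 * H - alpha)).
  { apply Rmult_le_compat_r; [exact (Rlt_le _ _ Hp)|apply one_sub_exp_opp_le]. }
  replace (X * Rpower x (2 - 2 * H - alpha)) with (2 * t * Rpower x (2 - 2 * H))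
    by (unfold X; rewrite Rpower_split_alpha; ring).
  assert (Rpower x (2 - 2 * H) <= 1) by (apply Rpower_le_1_of_le_1; lra).
  nra.
- assert (Rpower x (2 - 2 * H - alpha) <= 1) by (apply Rpower_le_1_of_ge_1; lra).
  generalize (exp_pos (- X)). intros. nra.
Qed.

Lemma abs_h_expr'_le x : 0 < x -> Rabs (h_expr' x) <= 2 * alpha * (2 * t + 1) / (x * x).
Proof.
intros Hx. unfold h_expr'.
set (X := 2 * t * Rpower x alpha).
assert (HX : 0 <= X) by (unfold X; generalize (Rpower_gt_0 x alpha); nra).
set (D := 2 * t * exp (- X) * Rpower x (2 - 2 * H)).
set (S := (1 - exp (- X)) * Rpower x (2 - 2 * H - alpha)).
assert (HD : 0 <= D <= 2 * t + 1).
{ split; [|apply damped_power_le; exact Hx].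
  unfold D. repeat apply Rmult_le_pos; try lra; [apply Rlt_le, exp_pos|apply Rlt_le, Rpower_gt_0]. }
assert (HS : 0 <= S <= 2 * t + 1).
{ split; [|apply saturated_power_le; exact Hx].
  unfold S. apply Rmult_le_pos; [now apply one_sub_exp_opp_ge_0|apply Rlt_le, Rpower_gt_0]. }
replace (2 * t * alpha * exp (- X) * Rpower x (2 - 2 * H)
         + (1 - 2 * H - alpha) * (1 - exp (- X)) * Rpower x (2 - 2 * H - alpha))
  with (alpha * D + (1 - 2 * H - alpha) * S) by (unfold D, S; ring).
unfold Rdiv. rewrite Rabs_mult, (Rabs_pos_eq (/ (x * x))) by (apply Rlt_le, Rinv_0_lt_compat; nra).
apply Rmult_le_compat_r; [apply Rlt_le, Rinv_0_lt_compat; nra|].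
apply Rabs_le. split; nra.
Qed.

Lemma h_expr_nonneg x : 0 <= h_expr x.
Proof.
unfold h_expr. apply Rmult_le_pos; [|apply Rlt_le, Rpower_gt_0].
apply one_sub_exp_opp_ge_0. generalize (Rpower_gt_0 x alpha). nra.
Qed.

Lemma h_expr_le_power x : h_expr x <= 2 * t * Rpower x (1 - 2 * H).
Proof.
unfold h_expr.
apply Rle_trans with (2 * t * Rpower x alpha * Rpower x (1 - 2 * H - alpha)).
- apply Rmult_le_compat_r; [apply Rlt_le, Rpower_gt_0|apply one_sub_exp_opp_le].
- rewrite Rmult_assoc, <- Rpower_plus. right. do 2 f_equal. ring.
Qed.

Lemma h_expr_le_inv x : 0 < x -> h_expr x <= (2 * t + 1) / x.
Proof.
intros Hx. unfold h_expr.
replace (1 - 2 * H - alpha) with (2 - 2 * H - alpha - 1) by ring.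
rewrite Rpower_minus_1 by exact Hx. unfold Rdiv. rewrite <- Rmult_assoc.
apply Rmult_le_compat_r; [apply Rlt_le, Rinv_0_lt_compat, Hx|].
apply saturated_power_le, Hx.
Qed.

Lemma abs_h_expr_le x : 0 < x <= 1 -> Rabs (h_expr x) <= 2 * t.
Proof.
intros Hx. rewrite Rabs_pos_eq by apply h_expr_nonneg.
apply Rle_trans with (2 * t * Rpower x (1 - 2 * H)); [apply h_expr_le_power|].
assert (Rpower x (1 - 2 * H) <= 1) by (apply Rpower_le_1_of_le_1; lra).
nra.
Qed.

Lemma abs_h_le x : x <= 1 -> Rabs (h alpha H t x) <= 2 * t.
Proof.
intros Hx. destruct (Rlt_dec 0 x) as [Hx0|Hx0].
- rewrite h_eq_h_expr by exact Hx0. apply abs_h_expr_le. lra.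
- unfold h. destruct (Rlt_dec 0 x); [lra|]. rewrite Rabs_R0. lra.
Qed.

Lemma is_lim_h_expr : is_lim h_expr p_infty 0.
Proof.
apply (is_lim_le_le_loc (fun _ => 0) (fun x => (2 * t + 1) * / x)).
- exists 0. intros x Hx. split; [apply h_expr_nonneg|apply h_expr_le_inv, Hx].
- apply is_lim_const.
- replace (Finite 0) with (Rbar_mult (2 * t + 1) (Rbar_inv p_infty)) by (simpl; f_equal; ring).
  apply is_lim_scal_l, is_lim_inv; [apply is_lim_id|discriminate].
Qed.

Lemma continuous_h x : 0 <= x -> continuous (h alpha H t) x.
Proof.
intros [Hx|<-].
- apply continuous_ext_loc with h_expr.
  + apply (filter_imp (fun y => 0 < y)); [|exact (open_gt 0 x Hx)].
    intros y Hy. symmetry. now apply h_eq_h_expr.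
  + apply (ex_derive_continuous (V := R_NormedModule)). eexists. now apply is_derive_h_expr.
- apply filterlim_locally. intros eps. pose proof (cond_pos eps) as Heps.
  assert (Hd : 0 < Rpower (eps / (2 * t)) (/ (1 - 2 * H))) by apply Rpower_gt_0.
  exists (mkposreal _ Hd). intros y Hy.
  change (Rabs (y - 0) < Rpower (eps / (2 * t)) (/ (1 - 2 * H))) in Hy.
  change (Rabs (h alpha H t y - h alpha H t 0) < eps).
  rewrite Rminus_0_r in Hy. unfold h at 2. destruct (Rlt_dec 0 0); [lra|].
  rewrite Rminus_0_r. unfold h. destruct (Rlt_dec 0 y) as [Hy0|Hy0]; [|rewrite Rabs_R0; lra].
  fold (h_expr y). rewrite Rabs_pos_eq by apply h_expr_nonneg.
  apply Rle_lt_trans with (2 * t * Rpower y (1 - 2 * H)); [apply h_expr_le_power|].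
  assert (Hsmall : Rpower y (1 - 2 * H) < eps / (2 * t)).
  { apply Rpower_lt_of_lt_root; [lra|apply Rdiv_lt_0_compat; lra|].
    rewrite Rabs_pos_eq in Hy by lra. lra. }
  apply Rmult_lt_reg_r with (/ (2 * t)); [apply Rinv_0_lt_compat; lra|].
  replace (2 * t * Rpower y (1 - 2 * H) * / (2 * t)) with (Rpower y (1 - 2 * H)) by (field; lra).
  exact Hsmall.
Qed.

Lemma ex_RInt_h_mul_cos r b : 0 <= b -> ex_RInt (fun xi => h alpha H t xi * cos (xi * r)) 0 b.
Proof.
intros Hb. apply (ex_RInt_continuous (V := R_CompleteNormedModule)).
rewrite Rmin_left, Rmax_right by exact Hb. intros x Hx.
apply (continuous_mult (h alpha H t)); [apply continuous_h; lra|].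
apply (ex_derive_continuous (V := R_NormedModule)). auto_derive. trivial.
Qed.

Lemma h_cos_transform_le r :
  1 < r ->
  exists I : R,
    is_improper_RInt_0_oo (fun xi => h alpha H t xi * cos (xi * r)) I /\
    Rabs I <= (4 * t + 2 * alpha * (2 * t + 1)) * Rpower r (- / 2).
Proof.
intros Hr.
set (g := fun xi => h alpha H t xi * cos (xi * r)).
set (K := 2 * alpha * (2 * t + 1)).
set (a := Rpower r (- / 2)).
assert (Ha0 : 0 < a) by apply Rpower_gt_0.
assert (Ha1 : a <= 1) by (apply Rpower_le_1_of_ge_1; lra).
assert (Hinv_r : / r = a * a).
{ unfold a. rewrite <- Rpower_plus. replace (- / 2 + - / 2) with (Ropp 1) by field.
  now rewrite Rpower_Ropp, Rpower_1 by lra. }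
destruct (is_lim_RInt_mul_cos h_expr h_expr' r a K) as [J [HJ HJbd]];
  [lra|exact Ha0|unfold K; nra| | | |exact is_lim_h_expr|].
- intros x Hx. apply is_derive_h_expr. lra.
- intros x Hx. apply continuous_h_expr'. lra.
- intros x Hx. apply abs_h_expr'_le. lra.
- exists (RInt g 0 a + J). split.
  + apply is_improper_RInt_0_oo_split; [lra|intros b Hb; now apply ex_RInt_h_mul_cos|].
    apply (is_lim_ext_loc (fun b => RInt (fun x => h_expr x * cos (x * r)) a b)); [|exact HJ].
    exists a. intros b Hb. apply RInt_ext. rewrite Rmin_left, Rmax_right by lra.
    intros x Hx. unfold g. rewrite h_eq_h_expr by lra. reflexivity.
  + assert (Hnear : Rabs (RInt g 0 a) <= (a - 0) * (2 * t)).
    { apply abs_RInt_le_const; [lra|now apply ex_RInt_h_mul_cos; lra|].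
      intros x Hx. apply (Rle_trans _ _ _ (abs_mul_cos_le _ _)), abs_h_le. lra. }
    assert (Hha : Rabs (h_expr a) <= 2 * t) by (apply abs_h_expr_le; lra).
    assert (Htail : (Rabs (h_expr a) + K / a) / r <= (2 * t + K) * a).
    { unfold Rdiv. rewrite Hinv_r, Rmult_plus_distr_r.
      replace (K * / a * (a * a)) with (K * a) by (field; lra).
      assert (Rabs (h_expr a) * (a * a) <= 2 * t * a).
      { apply Rle_trans with (2 * t * (a * a)); [apply Rmult_le_compat_r; nra|].
        apply Rmult_le_compat_l; nra. }
      lra. }
    eapply Rle_trans; [apply Rabs_triang|]. unfold K in *. lra.
Qed.

End Transform_of_h.

Theorem mainTheorem12 (alpha H t : R) :
  1 < alpha < 2 ->
  (2 - alpha) / 2 < H < 1 / 2 ->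
  0 < t ->
  exists C M : R, 0 < M /\
    forall r : R, M < r ->
      exists I : R,
        is_improper_RInt_0_oo (fun xi => h alpha H t xi * cos (xi * r)) I /\
        Rabs I <= C * Rpower r ((H - 1) / 2).
Proof.
intros Halpha HH Ht.
exists (4 * t + 2 * alpha * (2 * t + 1)), 1. split; [lra|].
intros r Hr.
destruct (h_cos_transform_le alpha H t Halpha HH Ht r Hr) as [I [HI HIbd]].
exists I. split; [exact HI|].
apply (Rle_trans _ _ _ HIbd), Rmult_le_compat_l; [nra|].
apply Rle_Rpower; lra.
Qed.
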